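(* Let $s,t$ be real numbers with $s > t > 0$ and let $n\geq 4$ be an integer. Then $|\det U_n| < M_n$, where $M_n$ is the maximum of $|\det A|$ over all $A \in \mathcal{G}_s^{n\times n}([0,t])$; that is, $U_n$ does not attain the maximum absolute determinant in $\mathcal{G}_s^{n\times n}([0,t])$.
   Context: For a real number $s$, a positive integer $n$ and a set $P \subseteq \mathbb{R}$, $\mathcal{G}_s^{n\times n}(P)$ denotes the set of all $n\times n$ real upper Hessenberg matrices $A=(a_{ij})$ with $a_{i+1,i} = s$ for $1\le i\le n-1$, $a_{ij}=0$ for $i > j+1$, and $a_{ij}\in P$ for all $i \le j$. $U_n = U_n(s,t)$ is the matrix in $\mathcal{G}_s^{n\times n}(\{0,t\})$ with $a_{ij} = t$ if $j \ge i$ and $j-i$ is even, and $a_{ij}=0$ if $j>i$ and $j-i$ is odd. *)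

From HB Require Import structures.
From mathcomp Require Import all_boot all_order all_algebra.
Set Implicit Arguments. Unset Strict Implicit. Unset Printing Implicit Defensive.
Import Order.TTheory GRing.Theory Num.Theory.
Local Open Scope ring_scope.

(* G_s^{n x n}(P): upper Hessenberg n x n matrices with subdiagonal entries s,
   zeros below the subdiagonal, and entries on/above the diagonal in P.
   Indices are 0-based ('I_n); the conditions are index-shift invariant. *)
Definition in_G (R : numDomainType) (s : R) (P : R -> Prop) (n : nat)
    (A : 'M[R]_n) : Prop :=
  forall i j : 'I_n,
    [/\ (i == j.+1 :> nat) -> A i j = s,
        (j.+1 < i)%N -> A i j = 0
      & (i <= j)%N -> P (A i j)].

Definition itv0t (R : numDomainType) (t : R) : R -> Prop :=
  fun x => 0 <= x <= t.

Definition U_mx (R : numDomainType) (n : nat) (s t : R) : 'M[R]_n :=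
  \matrix_(i < n, j < n)
    if (i <= j)%N then (if ~~ odd (j - i) then t else 0)
    else if (i == j.+1 :> nat) then s else 0.

(* Expanding an upper Hessenberg determinant with subdiagonal s along its last
   column expresses each leading minor L_(k+1) through L_0, ..., L_k.  When the
   {0,t}-pattern above the diagonal is 2-periodic in the columns, with a 0 on
   the superdiagonal and a t on the diagonal, this collapses to
   L_(k+3) = s^2 L_(k+1) + t L_(k+2); hence det U_n = t u_n for the Lucas
   sequence u_(k+2) = t u_(k+1) + s^2 u_k.  The witness is U_n with rows 0 and 1
   complemented in columns 1, ..., n-3, and the last two columns complemented
   below row 1 except at the corner.  The same recurrences compute its
   determinant, which exceeds det U_n by t^2 (s^2 - t^2) u_(n-3) > 0. *)

From HB Require Import structures.
From mathcomp Require Import all_boot all_order all_algebra.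
From mathcomp Require Import zify ring lra.
Import Order.TTheory GRing.Theory Num.Theory.
Set Implicit Arguments. Unset Strict Implicit. Unset Printing Implicit Defensive.
Local Open Scope ring_scope.

Lemma nat_ind2 (P : nat -> Prop) :
  P 0%N -> P 1%N -> (forall n, P n -> P n.+1 -> P n.+2) -> forall n, P n.
Proof.
move=> P0 P1 PSS n; suff : P n /\ P n.+1 by case.
by elim: n => [|n [Pn PSn]]; split=> //; apply: PSS.
Qed.

Section LeadingMinors.

Variable R : comPzRingType.

Definition lead_minor (f : nat -> nat -> R) k :=
  \det (\matrix_(i < k, j < k) f i j).

Lemma lead_minor0 f : lead_minor f 0 = 1.
Proof. exact: det_mx00. Qed.

Lemma eq_lead_minor f g k :
  (forall i j, (i < k)%N -> (j < k)%N -> f i j = g i j) ->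
  lead_minor f k = lead_minor g k.
Proof.
by move=> efg; congr (\det _); apply/matrixP => i j; rewrite !mxE efg.
Qed.

Variable s : R.

Definition hess_expand (c L : nat -> R) k :=
  \sum_(i < k.+1) c i * (- s) ^+ (k - i) * L i.

Lemma hess_expand0 c L : hess_expand c L 0 = c 0%N * L 0%N.
Proof. by rewrite /hess_expand big_ord1 mulr1. Qed.

Lemma hess_expandS c L k :
  hess_expand c L k.+1 = - s * hess_expand c L k + c k.+1 * L k.+1.
Proof.
rewrite /hess_expand big_ord_recr subnn mulr1 mulr_sumr; congr (_ + _).
by apply: eq_bigr => i _ /=; rewrite subSn -1?ltnS // exprS; ring.
Qed.

Lemma eq_hess_expand c c' L L' k :
  (forall i, (i <= k)%N -> c i = c' i) ->
  (forall i, (i <= k)%N -> L i = L' i) ->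
  hess_expand c L k = hess_expand c' L' k.
Proof. by move=> ec eL; apply: eq_bigr => i _; rewrite ec ?eL // -ltnS. Qed.

Lemma hess_expand_shift2 c c' L k : (forall i, (i <= k)%N -> c' i = c i) ->
  hess_expand c' L k.+2
  = s ^+ 2 * hess_expand c L k - s * c' k.+1 * L k.+1 + c' k.+2 * L k.+2.
Proof.
by move=> ec; rewrite !hess_expandS (@eq_hess_expand c' c L L k ec) //; ring.
Qed.

Variable f : nat -> nat -> R.
Hypotheses (f_sub : forall j, f j.+1 j = s)
           (f_low : forall i j, (j.+1 < i)%N -> f i j = 0).

Lemma det_hessenberg_lastcol (v : nat -> R) k :
  \det (\matrix_(i < k.+1, j < k.+1) if (j < k)%N then f i j else v i)
  = hess_expand v (lead_minor f) k.
Proof.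
elim: k v => [|k IH] v.
  by rewrite det_mx11 mxE hess_expand0 lead_minor0 mulr1.
set M := \matrix_(i, j) _.
have minor_last : row' ord_max (col' ord_max M) = \matrix_(i, j) f i j.
  by apply/matrixP => i j; rewrite !mxE !lift_max ltn_ord.
have minor_sub : row' ord_max (col' (widen_ord (leqnSn k.+1) ord_max) M)
    = \matrix_(i, j) if (j < k)%N then f i j else v i.
  apply/matrixP => i j; rewrite !mxE lift_max /= /bump.
  case: (ltnP j k) => hj; rewrite ?add0n ?add1n ltnS.
    by rewrite (ltnW hj).
  by rewrite ltnNge hj.
rewrite (expand_det_row _ ord_max) !big_ord_recr big1; last first.
  by move=> j _; rewrite mxE /= ltnS ltnW // f_low ?mul0r // !ltnS.
rewrite !mxE /= ltnn ltnSn f_sub /cofactor minor_last minor_sub.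
rewrite hess_expandS -IH.
have sign_odd n : (-1 : R) ^+ (n.+1 + n) = -1.
  by rewrite -signr_odd addSn addnn /= odd_double.
have sign_even n : (-1 : R) ^+ (n + n) = 1.
  by rewrite -signr_odd addnn odd_double.
rewrite /= sign_odd sign_even /lead_minor; ring.
Qed.

Lemma lead_minorS k :
  lead_minor f k.+1 = hess_expand (f^~ k) (lead_minor f) k.
Proof.
rewrite -det_hessenberg_lastcol /lead_minor; congr (\det _).
apply/matrixP => i j; rewrite !mxE.
case: (ltnP j k) => // hj.
by have -> : val j = k by apply/eqP; rewrite eqn_leq hj -ltnS ltn_ord.
Qed.

Lemma lead_minor_shift2 k : (forall i, (i <= k)%N -> f i k.+2 = f i k) ->
  lead_minor f k.+3 = s ^+ 2 * lead_minor f k.+1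
    - s * f k.+1 k.+2 * lead_minor f k.+1 + f k.+2 k.+2 * lead_minor f k.+2.
Proof.
move=> ef; rewrite lead_minorS.
by rewrite (@hess_expand_shift2 (f^~ k) (f^~ k.+2) _ _ ef) -lead_minorS.
Qed.

End LeadingMinors.

Section Lucas.

Variables (R : comPzRingType) (p q : R).

Fixpoint lucas n : R :=
  match n with
  | 0 => 0
  | 1 => 1
  | (n'.+1 as n1).+1 => p * lucas n1 + q * lucas n'
  end.

Lemma lucasSS n : lucas n.+2 = p * lucas n.+1 + q * lucas n.
Proof. by []. Qed.

End Lucas.

Lemma lucas_gt0 (R : numDomainType) (p q : R) n :
  0 < p -> 0 <= q -> 0 < lucas p q n.+1.
Proof.
move=> p_gt0 q_ge0; elim/nat_ind2: n => [|//|n IH1 IH2]; first exact: ltr01.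
  by rewrite /= mulr1 mulr0 addr0.
by rewrite lucasSS ltr_wpDr ?mulr_gt0 // mulr_ge0 // ltW.
Qed.

Section HessenbergPatterns.

Variables (R : comPzRingType) (s t : R).

Definition hess_pat (pat : nat -> nat -> bool) i j : R :=
  if (i <= j)%N then (if pat i j then t else 0) else if i == j.+1 then s else 0.

Lemma hess_pat_sub pat j : hess_pat pat j.+1 j = s.
Proof. by rewrite /hess_pat ltnn eqxx. Qed.

Lemma hess_pat_low pat i j : (j.+1 < i)%N -> hess_pat pat i j = 0.
Proof.
by move=> hij; rewrite /hess_pat leqNgt (ltnW hij) (gtn_eqF hij).
Qed.

Lemma lead_minor_patS pat k : lead_minor (hess_pat pat) k.+1
  = hess_expand s (hess_pat pat ^~ k) (lead_minor (hess_pat pat)) k.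
Proof. exact/lead_minorS/hess_pat_low/hess_pat_sub. Qed.

Lemma hess_pat_up pat i j :
  (i <= j)%N -> hess_pat pat i j = if pat i j then t else 0.
Proof. by rewrite /hess_pat => ->. Qed.

Lemma hess_pat_shift2 pat i k : (i <= k)%N -> pat i k.+2 = pat i k ->
  hess_pat pat i k.+2 = hess_pat pat i k.
Proof.
move=> hi periodic; have hi2 : (i <= k.+2)%N := leq_trans hi (leqW (leqnSn k)).
by rewrite /hess_pat hi hi2 periodic.
Qed.

Lemma lead_minor_pat_shift2 pat k :
  (forall i, (i <= k)%N -> pat i k.+2 = pat i k) ->
  ~~ pat k.+1 k.+2 -> pat k.+2 k.+2 ->
  lead_minor (hess_pat pat) k.+3
  = s ^+ 2 * lead_minor (hess_pat pat) k.+1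
    + t * lead_minor (hess_pat pat) k.+2.
Proof.
move=> periodic off diag.
rewrite (lead_minor_shift2 (hess_pat_sub pat) (@hess_pat_low pat)); last first.
  by move=> i hi; apply: hess_pat_shift2 => //; apply: periodic.
by rewrite !hess_pat_up // (negbTE off) diag; ring.
Qed.

End HessenbergPatterns.

Definition upat i j := ~~ odd (j - i)%N.

(* vpat is the pattern of U with rows 0 and 1 complemented outside column 0;
   wpat m is the pattern of the witness of size m + 4. *)
Definition vpat i j := (j == 0)%N || (upat i j (+) (i <= 1)%N).

Definition wpat m i j :=
  if (j <= m.+1)%N then vpat i j else (i == m.+3)%N || ~~ vpat i j.

Lemma upat_shift2 i k : (i <= k)%N -> upat i k.+2 = upat i k.
Proof. by move=> hi; rewrite /upat !subSn ?(leqW hi) //= negbK. Qed.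

Lemma vpat_shift2 i k : (0 < k)%N -> (i <= k)%N -> vpat i k.+2 = vpat i k.
Proof. by move=> k_gt0 hi; rewrite /vpat upat_shift2 // (gtn_eqF k_gt0). Qed.

Lemma vpat_superdiag k : vpat k.+2 k.+3 = false.
Proof. by rewrite /vpat /upat subSn // subnn. Qed.

Lemma vpat_diag k : vpat k.+2 k.+2.
Proof. by rewrite /vpat /upat subnn orbT. Qed.

Section PatternMinors.

Variables (R : comPzRingType) (s t : R).

Local Notation lucas := (lucas t (s ^+ 2)).
Local Notation LU := (lead_minor (hess_pat s t upat)).
Local Notation LV := (lead_minor (hess_pat s t vpat)).
Local Notation Vc := (hess_pat s t (fun i j => ~~ vpat i j)).

Lemma lead_minor_upat k : LU k.+1 = t * lucas k.+1.
Proof.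
elim/nat_ind2: k => [||k IH1 IH2].
1-2: by rewrite !(lead_minor_patS, hess_expandS, hess_expand0, lead_minor0)
          /hess_pat /=; ring.
rewrite lead_minor_pat_shift2 ?IH1 ?IH2 ?lucasSS; first by ring.
- by move=> i; apply: upat_shift2.
- by rewrite /upat subSn // subnn.
- by rewrite /upat subnn.
Qed.

Lemma lead_minor_vpat k : LV k.+2 = - (s * t) * (lucas k.+1 + t * lucas k).
Proof.
elim/nat_ind2: k => [||k IH1 IH2].
1-2: by rewrite !(lead_minor_patS, hess_expandS, hess_expand0, lead_minor0)
          /hess_pat /=; ring.
rewrite lead_minor_pat_shift2 ?IH1 ?IH2 ?lucasSS; first by ring.
- by move=> i; apply: vpat_shift2.
- by rewrite vpat_superdiag.
- exact: vpat_diag.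
Qed.

(* The left-hand side is the leading minor of size c + 1 of the vpat matrix
   with its last column complemented. *)
Lemma hess_expand_vpatC c : (1 < c)%N ->
  hess_expand s (Vc^~ c) LV c = - s * LV c.
Proof.
case: c => [|[|k]] // _; elim/nat_ind2: k => [||k IH1 IH2].
1-2: by rewrite !(lead_minor_patS, hess_expandS, hess_expand0, lead_minor0)
          /hess_pat /=; ring.
rewrite (@hess_expand_shift2 _ _ (Vc^~ k.+2)).
  rewrite IH1 [LV k.+4]lead_minor_pat_shift2 ?vpat_superdiag ?vpat_diag //.
    by rewrite !hess_pat_up // vpat_superdiag vpat_diag /=; ring.
  by move=> i; apply: vpat_shift2.
by move=> i hi; apply: hess_pat_shift2; rewrite // vpat_shift2.
Qed.

Section Witness.

Variable m : nat.

Local Notation LA := (lead_minor (hess_pat s t (wpat m))).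

Lemma lead_minor_wpat_vpat k : (k <= m.+2)%N -> LA k = LV k.
Proof.
move=> hk; apply: eq_lead_minor => i j _ hj.
have hjm : (j <= m.+1)%N := leq_trans hj hk.
by rewrite /hess_pat /wpat hjm.
Qed.

Lemma hess_pat_wpat_vpatC i k : (i <= m.+2)%N -> (m.+2 <= k)%N ->
  hess_pat s t (wpat m) i k = Vc i k.
Proof.
move=> hi hk; have him : (i < m.+3)%N := hi.
by rewrite /hess_pat /wpat (leqNgt k m.+1) hk (ltn_eqF him).
Qed.

Lemma lead_minor_wpat : LA m.+4 = - s * (LV m.+3 + t * LV m.+2).
Proof.
have LA3 : LA m.+3 = - s * LV m.+2.
  rewrite [LHS]lead_minor_patS -hess_expand_vpatC //.
  apply: eq_hess_expand => i hi; first exact: hess_pat_wpat_vpatC.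
  exact: lead_minor_wpat_vpat.
have := hess_expand_vpatC (isT : 1 < m.+3)%N.
rewrite hess_expandS hess_pat_up // vpat_diag mul0r addr0 => C3.
rewrite [LHS]lead_minor_patS hess_expandS LA3.
rewrite (@eq_hess_expand _ _ _ (Vc^~ m.+3) _ LV).
- by rewrite hess_pat_up // /wpat vpat_diag eqxx /= if_same C3; ring.
- by move=> i hi; apply: hess_pat_wpat_vpatC.
- by move=> i hi; apply: lead_minor_wpat_vpat.
Qed.

Lemma lead_minor_wpat_sub_upat :
  LA m.+4 - LU m.+4 = t ^+ 2 * (s ^+ 2 - t ^+ 2) * lucas m.+1.
Proof.
by rewrite lead_minor_wpat !lead_minor_vpat lead_minor_upat !lucasSS; ring.
Qed.

End Witness.

End PatternMinors.

Lemma hess_pat_in_G (R : numDomainType) (s t : R) pat n : 0 <= t ->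
  in_G s (itv0t t) (\matrix_(i < n, j < n) hess_pat s t pat i j).
Proof.
move=> t_ge0 i j; rewrite mxE; split=> [/eqP ->|/hess_pat_low //|hij].
  exact: hess_pat_sub.
by rewrite hess_pat_up // /itv0t; case: pat; rewrite lexx ?t_ge0.
Qed.

Lemma U_mx_upat (R : numDomainType) (s t : R) n :
  U_mx n s t = \matrix_(i < n, j < n) hess_pat s t upat i j.
Proof. by apply/matrixP => i j; rewrite !mxE. Qed.

Theorem proposition4p1 (R : realFieldType) (s t : R) (n : nat)
    (hts : t < s) (ht : 0 < t) (hn : (4 <= n)%N) :
  exists A : 'M[R]_n, in_G s (itv0t t) A /\ `|\det (U_mx n s t)| < `|\det A|.
Proof.
have [m ->] : exists m, n = m.+4 by exists (n - 4)%N; lia.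
exists (\matrix_(i, j) hess_pat s t (wpat m) i j).
split; first exact/hess_pat_in_G/ltW.
have lucas_pos k : 0 < lucas t (s ^+ 2) k.+1 by rewrite lucas_gt0 ?sqr_ge0.
have detU_gt0 : 0 < lead_minor (hess_pat s t upat) m.+4.
  by rewrite lead_minor_upat mulr_gt0.
have gap_gt0 : 0 < lead_minor (hess_pat s t (wpat m)) m.+4
                   - lead_minor (hess_pat s t upat) m.+4.
  rewrite lead_minor_wpat_sub_upat !mulr_gt0 ?exprn_gt0 // subr_gt0; nra.
rewrite U_mx_upat -!/(lead_minor _ _) !gtr0_norm //; lra.
Qed.
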